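(* Let $\Psi:\mathbb{R}\to\mathbb{R}$ be such that $\Sigma^r(\Psi)$ is dense in $C(\mathbb{R}^r,\mathbb{R})$ in the sense of uniform convergence on compact sets, and let $l\ge2$, $s\ge1$ be integers. Then $\Sigma_l^{r,s}(\Psi)$ is dense in $C(\mathbb{R}^r,\mathbb{R}^s)$ in the sense of uniform convergence on compact sets: for every nonempty compact $K\subset\mathbb{R}^r$, every $g=(g_1,\dots,g_s)\in C(\mathbb{R}^r,\mathbb{R}^s)$ and every $\varepsilon>0$ there is $f=(f_1,\dots,f_s)\in\Sigma_l^{r,s}(\Psi)$ with $\sum_{j=1}^s\sup_{x\in K}|f_j(x)-g_j(x)|<\varepsilon$.
   Context: $\mathbb{A}^n$ is the set of affine functions $\mathbb{R}^n\to\mathbb{R}$. $\Sigma^r(\Psi)=\{\sum_{j=1}^q\beta_j\Psi\circ A_j: q\in\mathbb{N},\beta_j\in\mathbb{R},A_j\in\mathbb{A}^r\}$. Define sets of maps inductively: $I_1^{(q)}=\{(\Psi\circ A_1,\dots,\Psi\circ A_q)^{\mathrm T}: A_1,\dots,A_q\in\mathbb{A}^r\}$ (maps $\mathbb{R}^r\to\mathbb{R}^q$), $I_{k+1}^{(q)}=\{(\Psi\circ A_1,\dots,\Psi\circ A_q)^{\mathrm T}\circ f: q'\in\mathbb{N},\ f\in I_k^{(q')},\ A_j\in\mathbb{A}^{q'}\}$, and $\Sigma_l^{r,s}(\Psi)=\{(A_1,\dots,A_s)^{\mathrm T}\circ f: q'\in\mathbb{N},\ f\in I_{l-1}^{(q')},\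 A_j\in\mathbb{A}^{q'}\}$ (the $l$-layer feedforward networks with activation $\Psi$, affine output layer, input $\mathbb{R}^r$ and output $\mathbb{R}^s$). Density of $\Sigma^r(\Psi)$ in the sense of uniform convergence on compact sets means: for every nonempty compact $K$, $g\in C(\mathbb{R}^r)$, $\varepsilon>0$ there is $f\in\Sigma^r(\Psi)$ with $\sup_K|f-g|<\varepsilon$. *)

(* R^n is 'rV[R]_n. *)
From HB Require Import structures.
From mathcomp Require Import all_boot all_order all_algebra.
From mathcomp Require Import all_classical all_reals all_analysis.
Set Implicit Arguments. Unset Strict Implicit. Unset Printing Implicit Defensive.
Import Order.TTheory GRing.Theory Num.Theory.
Import numFieldNormedType.Exports.
Local Open Scope classical_set_scope.
Local Open Scope ring_scope.

Definition affine (R : realType) (n : nat) : set ('rV[R]_n -> R) :=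
  [set A | exists (w : 'rV[R]_n) (b : R),
      A = fun x : 'rV[R]_n => \sum_(i < n) w ord0 i * x ord0 i + b].

Definition Sigma (R : realType) (Psi : R -> R) (r : nat) : set ('rV[R]_r -> R) :=
  [set f | exists (q : nat) (beta : 'I_q -> R) (A : 'I_q -> 'rV[R]_r -> R),
      (forall j, affine (A j)) /\
      f = fun x : 'rV[R]_r => \sum_(j < q) beta j * Psi (A j x)].

(* hidden k q = I_{k+1}^{(q)} (maps R^r -> R^q); N = {1,2,...} *)
Fixpoint hidden (R : realType) (Psi : R -> R) (r : nat) (k : nat) (q : nat)
  : set ('rV[R]_r -> 'rV[R]_q) :=
  match k with
  | 0 => [set f | exists A : 'I_q -> 'rV[R]_r -> R,
            (forall j, affine (A j)) /\ f = fun x : 'rV[R]_r => \row_j Psi (A j x)]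
  | k'.+1 => [set f | exists (q' : nat) (h : 'rV[R]_r -> 'rV[R]_q')
                 (A : 'I_q -> 'rV[R]_q' -> R),
            (0 < q')%N /\ @hidden R Psi r k' q' h /\
            (forall j, affine (A j)) /\ f = fun x : 'rV[R]_r => \row_j Psi (A j (h x))]
  end.

(* Sigma_l^{r,s}(Psi), for l >= 2: affine output layer after I_{l-1} *)
Definition SigmaL (R : realType) (Psi : R -> R) (l r s : nat)
  : set ('rV[R]_r -> 'rV[R]_s) :=
  [set f | exists (q' : nat) (h : 'rV[R]_r -> 'rV[R]_q')
             (A : 'I_s -> 'rV[R]_q' -> R),
      (0 < q')%N /\ @hidden R Psi r (l - 2) q' h /\
      (forall j, affine (A j)) /\ f = fun x : 'rV[R]_r => \row_j A j (h x)].

Definition supdist (R : realType) (r : nat) (K : set 'rV[R]_r)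
  (f g : 'rV[R]_r -> R) : \bar R :=
  ereal_sup [set (`|f x - g x|)%:E | x in K].

From HB Require Import structures.
From mathcomp Require Import all_boot all_order all_algebra.
From mathcomp Require Import all_classical all_reals all_analysis.
From mathcomp Require Import ring lra.
Import Order.TTheory GRing.Theory Num.Theory.
Import numFieldNormedType.Exports.
Local Open Scope classical_set_scope.
Local Open Scope ring_scope.

(* A network with one more hidden layer approximating
   g is obtained by feeding a shallower approximation F of g, spread along the
   diagonal direction e = (1,...,1), into a one-hidden-layer network U with
   U (t e) ~ t on a compact interval containing the values of F; U exists by
   the density of Sigma^r(Psi).  Parallel composition of hidden layers (which
   may be padded to any common depth) then handles the s output coordinates. *)

Section Affine.
Variable R : realType.

Lemma affine_cst (q : nat) (c : R) : affine (fun _ : 'rV[R]_q => c).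
Proof.
exists 0, c; apply: funext => z.
by rewrite big1 ?add0r // => i _; rewrite mxE mul0r.
Qed.

Lemma affine_lincomb (q : nat) (beta : 'I_q -> R) :
  affine (fun z : 'rV[R]_q => \sum_j beta j * z ord0 j).
Proof.
exists (\row_j beta j), 0; apply: funext => z; rewrite addr0.
by apply: eq_bigr => i _; rewrite mxE.
Qed.

Lemma affine_lsubmx (q1 q2 : nat) (a : 'rV[R]_q1 -> R) :
  affine a -> affine (fun z : 'rV[R]_(q1 + q2) => a (lsubmx z)).
Proof.
case=> w [b ->]; exists (row_mx w 0), b; apply: funext => z.
rewrite big_split_ord /= [X in _ = _ + X + _]big1 ?addr0; last first.
  by move=> i _; rewrite row_mxEr mxE mul0r.
by congr (_ + _); apply: eq_bigr => i _; rewrite row_mxEl !mxE.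
Qed.

Lemma affine_rsubmx (q1 q2 : nat) (a : 'rV[R]_q2 -> R) :
  affine a -> affine (fun z : 'rV[R]_(q1 + q2) => a (rsubmx z)).
Proof.
case=> w [b ->]; exists (row_mx 0 w), b; apply: funext => z.
rewrite big_split_ord /= [X in _ = X + _ + _]big1 ?add0r; last first.
  by move=> i _; rewrite row_mxEl mxE mul0r.
by congr (_ + _); apply: eq_bigr => i _; rewrite row_mxEr !mxE.
Qed.

Lemma affine_comp_scale (n q : nat) (A : 'rV[R]_n -> R) (a : 'rV[R]_q -> R)
    (e : 'rV[R]_n) :
  affine A -> affine a -> affine (fun z => A (a z *: e)).
Proof.
case=> w [b ->]; case=> v [c ->].
set C := \sum_(i < n) w ord0 i * e ord0 i.
have scaleE t : \sum_(i < n) w ord0 i * (t *: e) ord0 i = t * C.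
  by rewrite /C mulr_sumr; apply: eq_bigr => i _; rewrite mxE mulrCA.
exists (C *: v), (C * c + b); apply: funext => z; rewrite scaleE.
rewrite mulrDl mulr_suml addrA; congr (_ + _ + _); last by rewrite mulrC.
by apply: eq_bigr => i _; rewrite mxE; ring.
Qed.

End Affine.

Section Networks.
Variables (R : realType) (Psi : R -> R).

Lemma hidden_width1 (r k : nat) : exists h, @hidden R Psi r k 1 h.
Proof.
elim: k => [|k [h hh]].
  by eexists; exists (fun _ _ => 0); split=> // _; exact: affine_cst.
eexists; exists 1%N, h, (fun _ _ => 0); do !split=> //.
by move=> _; exact: affine_cst.
Qed.

Lemma hidden_concat {r k q1 q2 : nat} {h1 h2} :
  @hidden R Psi r k q1 h1 -> @hidden R Psi r k q2 h2 ->
  exists h, @hidden R Psi r k (q1 + q2) h /\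
    forall x, lsubmx (h x) = h1 x /\ rsubmx (h x) = h2 x.
Proof.
elim: k q1 q2 h1 h2 => [|k IH] q1 q2 h1 h2.
  move=> [A1 [A1aff ->]] [A2 [A2aff ->]].
  pose A j := match fintype.split j with inl i => A1 i | inr i => A2 i end.
  exists (fun x => \row_j Psi (A j x)); split.
    by exists A; split=> // j; rewrite /A; case: (fintype.split j).
  move=> x; split; apply/rowP => i; rewrite !mxE /A.
    by rewrite (unsplitK (inl i : 'I_q1 + 'I_q2)).
  by rewrite (unsplitK (inr i : 'I_q1 + 'I_q2)).
move=> [p1 [g1 [A1 [p1_gt0 [hg1 [A1aff ->]]]]]].
move=> [p2 [g2 [A2 [_ [hg2 [A2aff ->]]]]]].
have [g [hg gE]] := IH _ _ _ _ hg1 hg2.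
pose A j (z : 'rV[R]_(p1 + p2)) := match fintype.split j with
  | inl i => A1 i (lsubmx z) | inr i => A2 i (rsubmx z) end.
exists (fun x => \row_j Psi (A j (g x))); split.
  exists (p1 + p2)%N, g, A; rewrite addn_gt0 p1_gt0; do 3!split=> //.
  move=> j; rewrite /A; case: (fintype.split j) => i;
    [exact: affine_lsubmx | exact: affine_rsubmx].
move=> x; have [g1E g2E] := gE x.
split; apply/rowP => i; rewrite !mxE /A.
  by rewrite (unsplitK (inl i : 'I_q1 + 'I_q2)) g1E.
by rewrite (unsplitK (inr i : 'I_q1 + 'I_q2)) g2E.
Qed.

(* Scalar-output networks with k + 1 hidden layers: Sigma_(k+2)^(r,1)(Psi). *)
Definition scalar_net {r : nat} (k : nat) (f : 'rV[R]_r -> R) :=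
  exists q h a, (0 < q)%N /\ @hidden R Psi r k q h /\ affine a /\
    forall x, f x = a (h x).

(* The hidden width may be 0 here; a dummy neuron makes it positive. *)
Lemma scalar_net_of_hidden {r k q : nat} {h a} {f : 'rV[R]_r -> R} :
  @hidden R Psi r k q h -> affine a -> (forall x, f x = a (h x)) ->
  scalar_net k f.
Proof.
move=> hh aff fE; have [d hd] := hidden_width1 r k.
have [h' [hh' h'E]] := hidden_concat hh hd.
exists (q + 1)%N, h', (fun z => a (lsubmx z)); rewrite {1}addn1.
do 3!split=> //; first exact: affine_lsubmx.
by move=> x; rewrite fE (proj1 (h'E x)).
Qed.

Lemma scalar_net_cst (r k : nat) (c : R) : scalar_net k (fun _ : 'rV[R]_r => c).
Proof.
have [d hd] := hidden_width1 r k.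
exact: (scalar_net_of_hidden hd (affine_cst _ _ c)).
Qed.

Lemma scalar_net_of_Sigma (r : nat) (f : 'rV[R]_r -> R) :
  @Sigma R Psi r f -> scalar_net 0 f.
Proof.
move=> [q [beta [A [Aaff ->]]]].
apply: (scalar_net_of_hidden (h := fun x => \row_j Psi (A j x))
          (a := fun z => \sum_j beta j * z ord0 j)).
- by exists A.
- exact: affine_lincomb.
- by move=> x; apply: eq_bigr => j _; rewrite mxE.
Qed.

Lemma scalar_net_comp_Sigma (r n k : nat) (U : 'rV[R]_n -> R) (e : 'rV[R]_n)
    (F : 'rV[R]_r -> R) :
  @Sigma R Psi n U -> scalar_net k F -> scalar_net k.+1 (fun x => U (F x *: e)).
Proof.
move=> [p [beta [A [Aaff ->]]]] [q [h [a [q_gt0 [hh [aff FE]]]]]].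
apply: (scalar_net_of_hidden (h := fun x => \row_j Psi (A j (a (h x) *: e)))
          (a := fun z => \sum_j beta j * z ord0 j)).
- exists q, h, (fun j z => A j (a z *: e)); do 3!split=> //.
  by move=> j; exact: affine_comp_scale.
- exact: affine_lincomb.
- by move=> x; rewrite FE; apply: eq_bigr => j _; rewrite mxE.
Qed.

Lemma supdist_lt_at {r : nat} {K : set 'rV[R]_r} {f g} {eps : R} {x} :
  (supdist K f g < eps%:E)%E -> K x -> `|f x - g x| < eps.
Proof.
move=> fg Kx; rewrite -lte_fin; apply: le_lt_trans fg.
by apply: ereal_sup_ubound; exists x.
Qed.

Lemma supdist_le_bound (r : nat) (K : set 'rV[R]_r) f g (e : R) :
  (forall x, K x -> `|f x - g x| <= e) -> (supdist K f g <= e%:E)%E.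
Proof. by move=> fg; apply: ge_ereal_sup => _ [x Kx <-]; rewrite lee_fin fg. Qed.

Definition Sigma_dense (r : nat) :=
  forall (K : set 'rV[R]_r) (g : 'rV[R]_r -> R) (eps : R),
    compact K -> K !=set0 -> continuous g -> 0 < eps ->
    exists f, @Sigma R Psi r f /\ (supdist K f g < eps%:E)%E.

Definition scalar_net_dense (r k : nat) :=
  forall (K : set 'rV[R]_r) (g : 'rV[R]_r -> R) (eps : R),
    compact K -> K !=set0 -> continuous g -> 0 < eps ->
    exists f, scalar_net k f /\ forall x, K x -> `|f x - g x| < eps.

Lemma scalar_net_dense0 (r : nat) : Sigma_dense r -> scalar_net_dense r 0.
Proof.
move=> dense K g eps cK K0 cg eps_gt0.
have [f [Sf fg]] := dense K g eps cK K0 cg eps_gt0.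
by exists f; split; [exact: scalar_net_of_Sigma | move=> x; exact: supdist_lt_at].
Qed.

Lemma Sigma_approx_diagonal {r : nat} (B : R) {eps : R} : Sigma_dense r.+1 -> 0 < eps ->
  exists U, @Sigma R Psi r.+1 U /\
    forall t, `|t| <= B -> `|U (t *: const_mx 1) - t| < eps.
Proof.
move=> dense eps_gt0; pose e : 'rV[R]_r.+1 := const_mx 1.
pose I := [set t *: e | t in `[- `|B|, `|B|]].
have cI : compact I.
  apply: continuous_compact; last exact: segment_compact.
  by apply: continuous_subspaceT => t; apply: continuousZr_tmp; exact: cvg_id.
have I0 : I !=set0.
  by exists (0 *: e), 0 => //=; rewrite in_itv /= oppr_le0 normr_ge0.
have cfst : continuous (fun y : 'rV[R]_r.+1 => y ord0 ord0).
  by move=> y; exact: coord_continuous.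
have [U [SU Ufst]] := dense I _ eps cI I0 cfst eps_gt0.
exists U; split=> // t tB.
have It : I (t *: e).
  by exists t => //=; rewrite in_itv /= -ler_norml (le_trans tB) ?ler_norm.
by have := supdist_lt_at Ufst It; rewrite !mxE mulr1.
Qed.

Lemma scalar_net_dense_succ (r k : nat) : Sigma_dense r.+1 ->
  scalar_net_dense r.+1 k -> scalar_net_dense r.+1 k.+1.
Proof.
move=> dense IH K g eps cK K0 cg eps_gt0.
have [M0 [_ gM0]] := compact_bounded (continuous_compact (continuous_subspaceT cg) cK).
pose M := `|M0| + 1.
have gM x : K x -> `|g x| <= M.
  by move=> Kx; apply: (gM0 M); [rewrite /M; have := ler_norm M0; lra | exists x].
have eps2_gt0 : 0 < eps / 2 by lra.
have [F [netF Fg]] := IH K g _ cK K0 cg eps2_gt0.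
have [U [SU Ut]] := Sigma_approx_diagonal (M + eps / 2) dense eps2_gt0.
exists (fun x => U (F x *: const_mx 1)); split.
  exact: scalar_net_comp_Sigma.
move=> x Kx; have := Fg x Kx; have := gM x Kx.
have := ler_normD (F x - g x) (g x); rewrite subrK => FgE gxM Fgx.
have := Ut (F x) ltac:(lra).
have := ler_normD (U (F x *: const_mx 1) - F x) (F x - g x).
by rewrite addrA subrK; lra.
Qed.

(* Functions on R^0 are constant. *)
Lemma scalar_net_dense_rV0 (k : nat) : scalar_net_dense 0 k.
Proof.
move=> K g eps _ _ _ eps_gt0; exists (fun _ => g 0); split.
  exact: scalar_net_cst.
by move=> x _; rewrite (thinmx0 x) subrr normr0.
Qed.

Lemma scalar_net_denseP (r k : nat) : Sigma_dense r -> scalar_net_dense r k.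
Proof.
case: r => [|r] dense; first exact: scalar_net_dense_rV0.
elim: k => [|k IH]; first exact: scalar_net_dense0.
exact: scalar_net_dense_succ.
Qed.

Lemma hidden_approx_family (r k : nat) (K : set 'rV[R]_r)
    (G : nat -> 'rV[R]_r -> R) (eps : R) :
  Sigma_dense r -> compact K -> K !=set0 -> (forall j, continuous (G j)) ->
  0 < eps -> forall n,
  exists q h (A : nat -> 'rV[R]_q -> R), (0 < q)%N /\ @hidden R Psi r k q h /\
    (forall j, affine (A j)) /\
    forall j, (j < n)%N -> forall x, K x -> `|A j (h x) - G j x| < eps.
Proof.
move=> dense cK K0 cG eps_gt0.
elim=> [|n [q1 [h1 [A1 [q1_gt0 [hh1 [A1aff A1G]]]]]]].
  have [d hd] := hidden_width1 r k.
  exists 1%N, d, (fun _ _ => 0); do !split=> //.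
  by move=> j; exact: affine_cst.
have [F [[q2 [h2 [a2 [_ [hh2 [a2aff FE]]]]]] FG]] :=
  scalar_net_denseP r k dense K (G n) eps cK K0 (cG n) eps_gt0.
have [h [hh hE]] := hidden_concat hh1 hh2.
exists (q1 + q2)%N, h, (fun j => if (j < n)%N then fun z => A1 j (lsubmx z)
                                 else fun z => a2 (rsubmx z)).
rewrite addn_gt0 q1_gt0; do !split=> //.
  by move=> j; case: (j < n)%N; [exact: affine_lsubmx | exact: affine_rsubmx].
move=> j; rewrite ltnS leq_eqVlt => /orP [/eqP ->|jn] x Kx.
  by rewrite ltnn (proj2 (hE x)) -FE; exact: FG.
by rewrite jn (proj1 (hE x)); exact: A1G.
Qed.

End Networks.

Theorem theorem5p1p4 (R : realType) (Psi : R -> R) (r l s : nat) :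
  (forall (K : set 'rV[R]_r) (g : 'rV[R]_r -> R) (eps : R),
      compact K -> K !=set0 -> continuous g -> 0 < eps ->
      exists f, @Sigma R Psi r f /\ (supdist K f g < eps%:E)%E) ->
  (2 <= l)%N -> (1 <= s)%N ->
  forall (K : set 'rV[R]_r) (g : 'rV[R]_r -> 'rV[R]_s) (eps : R),
    compact K -> K !=set0 -> continuous g -> 0 < eps ->
    exists f, @SigmaL R Psi l r s f /\
      (\sum_(j < s) supdist K (fun x => f x ord0 j) (fun x => g x ord0 j)
         < eps%:E)%E.
Proof.
move=> dense _ + K g eps cK K0 cg eps_gt0.
case: s g cg => [//|s] g cg _.
pose G j x := g x ord0 (inord j : 'I_s.+1).
have cG j : continuous (G j).
  move=> x; apply: (@continuous_comp _ _ _ g (fun y => y ord0 (inord j)) x (cg x)).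
  exact: coord_continuous.
have s2_gt0 : 0 < s.+2%:R :> R by rewrite ltr0n.
pose e := eps / s.+2%:R.
have e_gt0 : 0 < e by rewrite divr_gt0.
have [q [h [A [q_gt0 [hh [Aaff AG]]]]]] :=
  @hidden_approx_family R Psi r (l - 2) K G e dense cK K0 cG e_gt0 s.+1.
exists (fun x => \row_(j < s.+1) A j (h x)); split; first by exists q, h, A.
apply: (@le_lt_trans _ _ (\sum_(j < s.+1) e%:E)%E).
  apply: lee_sum => j _; apply: supdist_le_bound => x Kx; rewrite mxE.
  by apply: ltW; have := AG j (ltn_ord j) x Kx; rewrite /G inord_val.
rewrite sumEFin lte_fin sumr_const card_ord -mulr_natl /e.
by rewrite mulrA ltr_pdivrMr // mulrC ltr_pM2l // ltr_nat.
Qed.
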